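(* Let $G$ be a digraph. Then $\operatorname{CSP}(G^\bot)$ and $\operatorname{CSP}(G^\top)$ are each equivalent to $\operatorname{CSP}(G)$ under first order reductions.
   Context: Digraphs are finite and loopless. For $G=(V,E)$, $G^\top$ is the digraph on $V\cup\{\top\}$ ($\top\notin V$) with edges $E\cup\{(v,\top):v\in V\}$, and $G^\bot$ is the digraph on $V\cup\{\bot\}$ with edges $E\cup\{(\bot,v):v\in V\}$. $\operatorname{CSP}(H)$ is the problem of deciding whether a finite input digraph admits a homomorphism to $H$. First order reductions are in the sense of descriptive complexity (Immerman): input structures carry a linear order, and the output structure is defined by first order formulas (possibly with distinct parameters) on tuples of elements of the input. *)

From mathcomp Require Import all_boot.
Set Implicit Arguments. Unset Strict Implicit. Unset Printing Implicit Defensive.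

(** G^top : vertices [option V], [None] is the new vertex top,
    edges E plus (v, top) for every v in V. *)
Definition top_rel (V : Type) (E : rel V) : rel (option V) :=
  fun a b => match a, b with
             | Some u, Some v => E u v
             | Some _, None => true
             | None, _ => false
             end.

(** G^bot : vertices [option V], [None] is the new vertex bot,
    edges E plus (bot, v) for every v in V. *)
Definition bot_rel (V : Type) (E : rel V) : rel (option V) :=
  fun a b => match a, b with
             | Some u, Some v => E u v
             | None, Some _ => true
             | _, None => false
             end.

Definition hom_exists (U W : Type) (EU : U -> U -> Prop) (EW : rel W) : Prop :=
  exists h : U -> W, forall u v, EU u v -> EW (h u) (h v).

Definition inCSP (V : finType) (E : rel V) (A : finType) (EA : rel A) : Prop :=
  hom_exists (fun a b => EA a b) E.

Inductive fo : Type :=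
| FEdge of nat & nat
| FLt of nat & nat
| FEq of nat & nat
| FTrue
| FNot of fo
| FAnd of fo & fo
| FOr of fo & fo
| FEx of nat & fo
| FAll of nat & fo.

Fixpoint fv (phi : fo) : seq nat :=
  match phi with
  | FEdge i j | FLt i j | FEq i j => [:: i; j]
  | FTrue => [::]
  | FNot f => fv f
  | FAnd f g | FOr f g => fv f ++ fv g
  | FEx i f | FAll i f => [seq n <- fv f | n != i]
  end.

Definition upd (A : Type) (rho : nat -> A) (i : nat) (a : A) : nat -> A :=
  fun n => if n == i then a else rho n.

Fixpoint sat (A : Type) (E lt : rel A) (rho : nat -> A) (phi : fo) : Prop :=
  match phi with
  | FEdge i j => E (rho i) (rho j)
  | FLt i j => lt (rho i) (rho j)
  | FEq i j => rho i = rho j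
  | FTrue => True
  | FNot f => ~ sat E lt rho f
  | FAnd f g => sat E lt rho f /\ sat E lt rho g
  | FOr f g => sat E lt rho f \/ sat E lt rho g
  | FEx i f => exists a, sat E lt (upd rho i a) f
  | FAll i f => forall a, sat E lt (upd rho i a) f
  end.

Definition strict_linear_order (A : eqType) (lt : rel A) : Prop :=
  irreflexive lt /\ transitive lt /\ (forall x y : A, x != y -> lt x y || lt y x).

(** Variables 0..k-1 denote the tuple x, k..2k-1 the tuple y and
   2k..2k+p-1 the parameters.  The reduction must be correct
   for every nonempty (witnessed by [a0]) finite loopless digraph A, every
   linear order on A and every choice of pairwise distinct parameters c;
   its output must be a (loopless) digraph.  [a0] only fills variables that
   are not free in the (bounded) formulas and is hence irrelevant. *)
Definition fo_reduction (V1 : finType) (E1 : rel V1) (V2 : finType) (E2 : rel V2) : Prop :=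
  exists (k p : nat) (phiU phiE : fo),
    all (fun n => n < k.*2 + p) (fv phiU) /\
    all (fun n => n < k.*2 + p) (fv phiE) /\
    forall (A : finType) (EA : rel A), irreflexive EA ->
    forall lt : rel A, strict_linear_order lt ->
    forall c : p.-tuple A, uniq c ->
    forall a0 : A,
      let U := {x : k.-tuple A | sat EA lt (fun n => nth a0 (x ++ x ++ c) n) phiU} in
      let EU := fun u v : U => sat EA lt (fun n => nth a0 (proj1_sig u ++ proj1_sig v ++ c) n) phiE in
      (forall u : U, ~ EU u u) /\
      (inCSP E1 EA <-> hom_exists EU E2).

Definition fo_equivalent (V1 : finType) (E1 : rel V1) (V2 : finType) (E2 : rel V2) : Prop :=
  fo_reduction E1 E2 /\ fo_reduction E2 E1.

From mathcomp Require Import all_boot.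
From Stdlib Require Import ClassicalEpsilon.

(* A vertex with an in-neighbour can never be sent to bot, while all other
   vertices can; so A -> G^bot iff the subgraph of A induced by the vertices
   with an in-neighbour maps to G, and that subgraph is first-order definable
   in A.  Conversely, A -> G iff A x {0,1} -> G^bot, where the copy A x {1}
   carries the edges of A and each (x,0) -> (x,1) is an edge: these edges keep
   A x {1} away from bot.  Two distinct parameters serve as the second
   coordinate to interpret this graph in A.  G^top is the dual case, obtained
   by reversing all edges. *)

Set Implicit Arguments.
Unset Strict Implicit.
Unset Printing Implicit Defensive.

Definition flip_rel (T : Type) (R : T -> T -> Prop) : T -> T -> Prop :=
  fun a b => R b a.

Definition is_hom (U U' : Type) (EU : U -> U -> Prop) (EU' : U' -> U' -> Prop)
    (f : U -> U') : Prop :=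
  forall u v, EU u v -> EU' (f u) (f v).

Lemma factor_Some (U V : Type) (f : U -> option V) :
  (forall u, f u <> None) -> exists g : U -> V, forall u, f u = Some (g u).
Proof.
move=> f_some.
exists (fun u => match f u as o return o <> None -> V with
                 | Some v => fun _ => v
                 | None => fun f_none => False_rect V (f_none erefl)
                 end (f_some u)).
by move=> u; case: (f u) (f_some u).
Qed.

Section HomExists.
Variables (W : Type) (EW : rel W).

Lemma hom_exists_comp (U U' : Type) (EU : U -> U -> Prop) (EU' : U' -> U' -> Prop)
    (f : U -> U') :
  is_hom EU EU' f -> hom_exists EU' EW -> hom_exists EU EW.
Proof. by move=> f_hom [h h_hom]; exists (h \o f) => u v /f_hom /h_hom. Qed.

Lemma hom_exists_equiv (U U' : Type) (EU : U -> U -> Prop) (EU' : U' -> U' -> Prop)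
    (f : U -> U') (g : U' -> U) :
  is_hom EU EU' f -> is_hom EU' EU g -> hom_exists EU EW <-> hom_exists EU' EW.
Proof.
by move=> f_hom g_hom; split;
  [exact: hom_exists_comp g_hom | exact: hom_exists_comp f_hom].
Qed.

Lemma hom_exists_flip (U : Type) (EU : U -> U -> Prop) :
  hom_exists EU EW <-> hom_exists (flip_rel EU) (fun a b => EW b a).
Proof. by split=> [[h h_hom]|[h h_hom]]; exists h => u v /h_hom. Qed.

End HomExists.

Arguments hom_exists_equiv {W EW U U' EU EU'} f g.

Lemma hom_exists_ext (U W : Type) (EU EU' : U -> U -> Prop) (EW EW' : rel W) :
  (forall u v, EU u v <-> EU' u v) -> EW =2 EW' ->
  hom_exists EU EW <-> hom_exists EU' EW'.
Proof.
move=> EUE EWE; split=> -[h h_hom]; exists h => u v.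
  by rewrite -EWE => /EUE /h_hom.
by rewrite EWE => /EUE /h_hom.
Qed.

Lemma top_rel_flip (V : Type) (E : rel V) (a b : option V) :
  top_rel E a b = bot_rel (fun x y => E y x) b a.
Proof. by case: a; case: b. Qed.

Definition induced (A : Type) (EA : A -> A -> Prop) (P : A -> Prop) :
    sig P -> sig P -> Prop :=
  fun u v => EA (sval u) (sval v).
Arguments induced {A} EA P.

Lemma hom_bot_rel_induced (V : Type) (E : rel V) (A : Type) (EA : A -> A -> Prop) :
  hom_exists EA (bot_rel E) <-> hom_exists (induced EA (fun x => exists z, EA z x)) E.
Proof.
split=> [[h h_hom]|[g g_hom]].
  have h_some (u : {x | exists z, EA z x}) : h (sval u) <> None.
    case: u => x [z /h_hom] /=.
    by case: (h z) => [?|]; case: (h x).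
  have [g hE] := factor_Some h_some.
  by exists g => u v /h_hom; rewrite (hE u) (hE v).
exists (fun x => match excluded_middle_informative (exists z, EA z x) with
                 | left in_x => Some (g (exist _ x in_x))
                 | right _ => None
                 end) => x y Exy.
case: (excluded_middle_informative (exists z, EA z y)) => [in_y|]; last first.
  by move=> /(_ (ex_intro _ x Exy)).
case: excluded_middle_informative => [in_x|] //.
exact: g_hom.
Qed.

Lemma hom_top_rel_induced (V : Type) (E : rel V) (A : Type) (EA : A -> A -> Prop) :
  hom_exists EA (top_rel E) <-> hom_exists (induced EA (fun x => exists z, EA x z)) E.
Proof.
rewrite hom_exists_flip.
rewrite (@hom_exists_ext _ _ _ (flip_rel EA) _ (bot_rel (fun x y => E y x))) //;
  last by move=> a b; exact: top_rel_flip.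
by rewrite hom_bot_rel_induced hom_exists_flip.
Qed.

Definition bot_lift (A : Type) (EA : A -> A -> Prop) (a b : A * bool) : Prop :=
  match a, b with
  | (x, true), (y, true) => EA x y
  | (x, false), (y, true) => x = y
  | _, _ => False
  end.

Definition top_lift (A : Type) (EA : A -> A -> Prop) : A * bool -> A * bool -> Prop :=
  flip_rel (bot_lift (flip_rel EA)).

(* The edge (x, false) -> (x, true) keeps every vertex (x, true) away from bot. *)
Lemma hom_bot_lift (V : Type) (E : rel V) (A : Type) (EA : A -> A -> Prop) :
  hom_exists EA E <-> hom_exists (bot_lift EA) (bot_rel E).
Proof.
split=> [[g g_hom]|[h h_hom]].
  by exists (fun a => if a.2 then Some (g a.1) else None) => -[x []] [y []] //= /g_hom.
have h_some x : h (x, true) <> None.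
  move: (h_hom (x, false) (x, true) erefl).
  by case: (h (x, true)); case: (h (x, false)).
have [g hE] := factor_Some h_some.
by exists g => x y /(h_hom (x, true) (y, true)); rewrite !hE.
Qed.

Lemma hom_top_lift (V : Type) (E : rel V) (A : Type) (EA : A -> A -> Prop) :
  hom_exists EA E <-> hom_exists (top_lift EA) (top_rel E).
Proof.
rewrite hom_exists_flip hom_bot_lift hom_exists_flip.
by apply: hom_exists_ext => // a b; rewrite top_rel_flip.
Qed.

Lemma fo_reduction_bot_rel (V : finType) (E : rel V) : fo_reduction (bot_rel E) E.
Proof.
exists 1, 0, (FEx 2 (FEdge 2 0)), (FEdge 0 1); do 2!(split; first by []).
move=> A EA EA_irr lt _ c _ a0 U EU; split.
  by case=> -[[|x []] //= ?] ?; rewrite /EU /= EA_irr.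
rewrite /inCSP hom_bot_rel_induced.
have in_nbr (u : U) : exists z, EA z (nth a0 (sval u) 0).
  by case: u => -[[|x []] //= ?] [z Ezx]; exists z.
pose to_U (w : {x | exists z, EA z x}) : U := exist _ [tuple sval w] (svalP w).
pose of_U (u : U) : {x | exists z, EA z x} := exist _ _ (in_nbr u).
apply: (hom_exists_equiv (EU' := EU) to_U of_U).
  by case=> x ? [y ?].
by case=> -[[|x []] //= ?] ? [[[|y []] //= ?] ?].
Qed.

Lemma fo_reduction_top_rel (V : finType) (E : rel V) : fo_reduction (top_rel E) E.
Proof.
exists 1, 0, (FEx 2 (FEdge 0 2)), (FEdge 0 1); do 2!(split; first by []).
move=> A EA EA_irr lt _ c _ a0 U EU; split.
  by case=> -[[|x []] //= ?] ?; rewrite /EU /= EA_irr.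
rewrite /inCSP hom_top_rel_induced.
have out_nbr (u : U) : exists z, EA (nth a0 (sval u) 0) z.
  by case: u => -[[|x []] //= ?] [z Exz]; exists z.
pose to_U (w : {x | exists z, EA x z}) : U := exist _ [tuple sval w] (svalP w).
pose of_U (u : U) : {x | exists z, EA x z} := exist _ _ (out_nbr u).
apply: (hom_exists_equiv (EU' := EU) to_U of_U).
  by case=> x ? [y ?].
by case=> -[[|x []] //= ?] ? [[[|y []] //= ?] ?].
Qed.

(* The pair (x, c1) encodes (x, true) and (x, c2) encodes (x, false); all
   other pairs are isolated vertices. *)
Lemma fo_reduction_bot_lift (V : finType) (E : rel V) : fo_reduction E (bot_rel E).
Proof.
exists 2, 2, FTrue,
  (FOr (FAnd (FEq 1 4) (FAnd (FEq 3 4) (FEdge 0 2)))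
       (FAnd (FEq 1 5) (FAnd (FEq 3 4) (FEq 0 2)))); do 2!(split; first by []).
move=> A EA EA_irr lt _ [[|c1 [|c2 [|]]] ?] // c_uniq a0 U EU.
have c12 : c1 != c2 by move: c_uniq; rewrite /= inE andbT.
split.
  case=> -[[|x [|x' []]] //= ?] ?; rewrite /EU /= => -[[_ [_ Exx]]|[-> [c2E _]]].
    by rewrite EA_irr in Exx.
  by rewrite c2E eqxx in c12.
rewrite /inCSP (hom_bot_lift E).
pose to_U (a : A * bool) : U := exist _ [tuple a.1; if a.2 then c1 else c2] I.
pose of_U (u : U) : A * bool := (nth a0 (sval u) 0, nth a0 (sval u) 1 == c1).
apply: (hom_exists_equiv (EU' := EU) to_U of_U).
  by case=> x [] [y []] //= Exy; [left | right].
case=> -[[|x [|x' []]] //= ?] ? [[[|y [|y' []]] //= ?] ?].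
rewrite /EU /= => -[[-> [-> Exy]]|[-> [-> ->]]]; first by rewrite eqxx.
by rewrite eqxx eq_sym (negbTE c12).
Qed.

Lemma fo_reduction_top_lift (V : finType) (E : rel V) : fo_reduction E (top_rel E).
Proof.
exists 2, 2, FTrue,
  (FOr (FAnd (FEq 1 4) (FAnd (FEq 3 4) (FEdge 0 2)))
       (FAnd (FEq 1 4) (FAnd (FEq 3 5) (FEq 0 2)))); do 2!(split; first by []).
move=> A EA EA_irr lt _ [[|c1 [|c2 [|]]] ?] // c_uniq a0 U EU.
have c12 : c1 != c2 by move: c_uniq; rewrite /= inE andbT.
split.
  case=> -[[|x [|x' []]] //= ?] ?; rewrite /EU /= => -[[_ [_ Exx]]|[-> [c1E _]]].
    by rewrite EA_irr in Exx.
  by rewrite c1E eqxx in c12.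
rewrite /inCSP (hom_top_lift E).
pose to_U (a : A * bool) : U := exist _ [tuple a.1; if a.2 then c1 else c2] I.
pose of_U (u : U) : A * bool := (nth a0 (sval u) 0, nth a0 (sval u) 1 == c1).
apply: (hom_exists_equiv (EU' := EU) to_U of_U).
  by case=> x [] [y []] //= Exy; [left | right].
case=> -[[|x [|x' []]] //= ?] ? [[[|y [|y' []]] //= ?] ?].
rewrite /EU /= => -[[-> [-> Exy]]|[-> [-> ->]]]; first by rewrite eqxx.
by rewrite eqxx eq_sym (negbTE c12).
Qed.

Theorem proposition3p2 (V : finType) (E : rel V) (Hloop : irreflexive E) :
  fo_equivalent (bot_rel E) E /\ fo_equivalent (top_rel E) E.
Proof.
split; split; [exact: fo_reduction_bot_rel | exact: fo_reduction_bot_lift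
             | exact: fo_reduction_top_rel | exact: fo_reduction_top_lift].
Qed.
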